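(* Let $\mathbf{A}$ be a 5-dimensional LV algebra with natural basis $e_1,\dots,e_5$ such that $e_2e_4=\frac12(e_2+e_4)$, $e_2e_5=\frac12(e_2+e_5)$, and $e_ie_j\neq\frac12(e_i+e_j)$ for all other pairs of distinct indices $i,j$. Then $\mathrm{Der}(\mathbf{A})=\{0\}$.
   Context: Let $\mathbb{F}$ be a field of characteristic different from $2$. A Lotka–Volterra (LV) algebra of dimension $5$ over $\mathbb{F}$ is a commutative (not necessarily associative) $\mathbb{F}$-algebra $\mathbf{A}$ with a basis $e_1,\dots,e_5$ (the natural basis) such that $e_ie_j=\alpha_{ij}e_i+\alpha_{ji}e_j$ with $\alpha_{ij}\in\mathbb{F}$, $\alpha_{ii}=\frac12$ and $\alpha_{ij}+\alpha_{ji}=1$ for all $i,j$. A derivation is a linear map $D:\mathbf{A}\to\mathbf{A}$ with $D(uv)=D(u)v+uD(v)$ for all $u,v$; $\mathrm{Der}(\mathbf{A})$ is the set of derivations. *)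

From HB Require Import structures.
From mathcomp Require Import all_boot all_order all_algebra.
Set Implicit Arguments. Unset Strict Implicit. Unset Printing Implicit Defensive.
Import Order.TTheory GRing.Theory Num.Theory.
Local Open Scope ring_scope.

(* Elements of the 5-dim algebra are row vectors of coordinates w.r.t. the
   natural basis e_0,...,e_4 (0-based: paper's e_{k+1} is our e k). *)
Definition e (F : fieldType) (k : 'I_5) : 'rV[F]_5 := delta_mx 0 k.

(* Structure constants a : e_i e_j = a i j e_i + a j i e_j. *)
Definition is_LV (F : fieldType) (a : 'M[F]_5) : Prop :=
  (forall i, a i i = 2^-1) /\ (forall i j, a i j + a j i = 1).

(* Bilinear extension of e_i e_j = a i j e_i + a j i e_j:
   (u v)_k = sum_j u_k v_j a_kj + sum_i u_i v_k a_ki. *)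
Definition lv_mul (F : fieldType) (a : 'M[F]_5) (u v : 'rV[F]_5) : 'rV[F]_5 :=
  \row_k (\sum_j u 0 k * v 0 j * a k j + \sum_i u 0 i * v 0 k * a k i).

(* A linear map is represented by its matrix D acting on the right: u |-> u *m D. *)
Definition is_derivation (F : fieldType) (a : 'M[F]_5) (D : 'M[F]_5) : Prop :=
  forall u v : 'rV[F]_5,
    lv_mul a u v *m D = lv_mul a (u *m D) v + lv_mul a u (v *m D).

From HB Require Import structures.
From mathcomp Require Import all_boot all_order all_algebra.
From mathcomp Require Import ring.
Import Order.TTheory GRing.Theory Num.Theory.
Set Implicit Arguments.
Unset Strict Implicit.
Local Open Scope ring_scope.

(* For k <> i, the e_k-coordinate of D(e_i) = D(e_i e_i) = 2 D(e_i) e_i reads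
   D_ik = 2 a_ki D_ik, so D_ik vanishes unless e_k e_i = (e_k + e_i)/2; here
   these "half" pairs form the path e_4 - e_2 - e_5 (paper's numbering).  The
   e_i-coordinate gives sum_m a_im D_im = 0, which kills D_ii once the rest of
   row i vanishes; this settles e_1 and e_3.  For the centre e_2, the triple
   (e_2, e_5, e_4) yields D_24 (1/2 - a_45) = 0, and symmetrically D_25 = 0.
   For a leaf, say e_4, the relations sum_m a_4m D_4m = 0 and
   sum_m a_5m D_4m = 0 read D_42 + D_44 = 0 and D_42 / 2 + a_54 D_44 = 0,
   so D_42 = 0 because a_54 <> 1/2. *)

Lemma eq0_of_mul_half (F : fieldType) (x y : F) : y * 2^-1 = y * x -> x != 2^-1 -> y = 0.
Proof.
move=> yx nx; apply/eqP; have /eqP := subrr (y * x); rewrite -{1}yx -mulrBr mulf_eq0.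
by rewrite subr_eq0 [_^-1 == _]eq_sym (negbTE nx) orbF.
Qed.

Section LVBasis.
Variables (F : fieldType) (a : 'M[F]_5).

Lemma eE k m : e F k 0 m = (k == m)%:R.
Proof. by rewrite /e mxE eqxx /= eq_sym. Qed.

Lemma lv_mul_e i j : lv_mul a (e F i) (e F j) = a i j *: e F i + a j i *: e F j.
Proof.
apply/rowP => k; rewrite !mxE (bigD1 j) //= (bigD1 i (P := xpredT)) //= !big1 ?addr0.
- rewrite !eE !eqxx mulr1 mul1r mulrC [_ * (k == j)%:R]mulrC; congr (_ + _).
  + by case: (k =P i) => [->|_]; rewrite ?mulr0.
  + by case: (k =P j) => [->|_]; rewrite ?mul0r.
- by move=> m /negbTE nm; rewrite !eE [_ == m]eq_sym nm /= !(mulr0, mul0r).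
- by move=> m /negbTE nm; rewrite !eE [_ == m]eq_sym nm /= !(mulr0, mul0r).
Qed.

Lemma lv_mul_eR u j k :
  lv_mul a u (e F j) 0 k = u 0 k * a k j + (j == k)%:R * \sum_m u 0 m * a k m.
Proof.
rewrite mxE (bigD1 j) //= big1 => [|m /negbTE nm]; last first.
  by rewrite eE [_ == m]eq_sym nm /= !(mulr0, mul0r).
rewrite eE eqxx mulr1 addr0 mulr_sumr; congr (_ + _).
by apply: eq_bigr => m _; rewrite eE mulrCA mulrA.
Qed.

Lemma lv_mul_eL i v k :
  lv_mul a (e F i) v 0 k = (i == k)%:R * \sum_m v 0 m * a k m + v 0 k * a k i.
Proof.
rewrite mxE [X in _ + X](bigD1 i) //= [X in _ + (_ + X)]big1 => [|m /negbTE nm]; last first.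
  by rewrite eE [_ == m]eq_sym nm /= !mul0r.
rewrite !eE eqxx mul1r addr0 mulr_sumr; congr (_ + _).
by apply: eq_bigr => m _; rewrite mulrA.
Qed.

Hypothesis two : (2%:R : F) != 0.
Hypothesis LV : is_LV a.

Lemma LV_half_sym i j : a i j = 2^-1 -> a j i = 2^-1.
Proof. by move=> aij; have := LV.2 i j; rewrite aij => h; apply: (addrI 2^-1); rewrite h; field. Qed.

Lemma lv_mul_e_half i j :
  i != j -> (lv_mul a (e F i) (e F j) == 2^-1 *: (e F i + e F j)) = (a i j == 2^-1).
Proof.
move=> nij; rewrite lv_mul_e scalerDr; apply/eqP/eqP => [/rowP/(_ i)|aij].
  by rewrite !mxE !eqxx (negbTE nij) /= !(mulr1, mulr0, addr0).
by rewrite aij LV_half_sym.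
Qed.

End LVBasis.

Section Derivation.
Variables (F : fieldType) (a D : 'M[F]_5).
Hypothesis HD : is_derivation a D.

(* The e_k-coordinate of D(e_i e_j) = D(e_i) e_j + e_i D(e_j); row i of D is D(e_i). *)
Lemma derivationE i j k :
  a i j * D i k + a j i * D j k =
  D i k * a k j + (j == k)%:R * \sum_m D i m * a k m
  + ((i == k)%:R * \sum_m D j m * a k m + D j k * a k i).
Proof.
have /rowP/(_ k) := HD (e F i) (e F j).
rewrite lv_mul_e mulmxDl -!scalemxAl /e -!rowE -/(e F i) -/(e F j).
rewrite [in X in _ = X]mxE lv_mul_eR lv_mul_eL !mxE => ->.
by congr (_ + _ * _ + (_ * _ + _)); apply: eq_bigr => m _; rewrite mxE.
Qed.

Hypothesis two : (2%:R : F) != 0.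
Hypothesis LV : is_LV a.

Lemma derivation_eq0_nonhalf i k : k != i -> a k i != 2^-1 -> D i k = 0.
Proof.
move=> nki; apply: eq0_of_mul_half; apply: (mulfI two).
have := derivationE i i k; rewrite eq_sym (negbTE nki) LV.1 /= !mul0r add0r addr0 => E.
by transitivity (2^-1 * D i k + 2^-1 * D i k); [field | rewrite E; ring].
Qed.

Lemma derivation_sum_diag i : \sum_m D i m * a i m = 0.
Proof.
have := derivationE i i i; rewrite eqxx LV.1 /= !mul1r => E.
apply: (mulfI two); rewrite mulr0 -[RHS](subrr (2^-1 * D i i + 2^-1 * D i i)) {1}E.
ring.
Qed.

Lemma derivation_sum_offdiag i j : j != i -> \sum_m D j m * a i m = D j i * (a j i - 2^-1).
Proof.
move=> nji; have := derivationE i j i; rewrite eqxx (negbTE nji) LV.1 /= mul0r mul1r addr0 => E.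
have -> : \sum_m D j m * a i m
         = a i j * D i i + a j i * D j i - D i i * a i j - D j i * 2^-1 by rewrite E; ring.
ring.
Qed.

Lemma derivation_eq0_half_path i j k :
  j != i -> k != i -> k != j -> a i j = 2^-1 -> a k j != 2^-1 -> D i k = 0.
Proof.
move=> nji nki nkj aij akj; have Djk := derivation_eq0_nonhalf nkj akj.
apply: eq0_of_mul_half akj.
have := derivationE i j k; rewrite ![_ == k]eq_sym (negbTE nki) (negbTE nkj).
rewrite Djk aij /= !(mulr0, mul0r, addr0) => E.
by rewrite mulrC E.
Qed.

Lemma derivation_row_eq0 i : (forall k, k != i -> D i k = 0) -> row i D = 0.
Proof.
move=> Dik; have Dii : D i i = 0.
  apply: (@eq0_of_mul_half _ 0); last by rewrite eq_sym invr_eq0.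
  rewrite mulr0 -(LV.1 i) -(derivation_sum_diag i) (bigD1 i) //= big1 ?addr0 //.
  by move=> m /Dik ->; rewrite mul0r.
by apply/rowP => k; rewrite !mxE; case: (eqVneq k i) => [->|/Dik].
Qed.

Lemma derivation_row_isolated i : (forall k, k != i -> a k i != 2^-1) -> row i D = 0.
Proof.
move=> nonhalf; apply: derivation_row_eq0 => k nki.
exact: derivation_eq0_nonhalf nki (nonhalf k nki).
Qed.

Lemma derivation_row_leaf i c l :
  c != i -> l != i -> l != c -> a c i = 2^-1 -> a l c = 2^-1 ->
  (forall k, k != i -> k != c -> a k i != 2^-1) -> row i D = 0.
Proof.
move=> nci nli nlc aci alc nonhalf.
have Dik k : k != i -> k != c -> D i k = 0.
  by move=> nki nkc; apply: derivation_eq0_nonhalf nki (nonhalf k nki nkc).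
have sum_row (f : 'I_5 -> F) : \sum_m D i m * f m = D i i * f i + D i c * f c.
  rewrite (bigD1 i) //= (bigD1 c) //= addrA big1 ?addr0 // => m /andP[nmi nmc].
  by rewrite Dik ?mul0r.
have Dii : D i i = - D i c.
  have := derivation_sum_diag i; rewrite sum_row (LV.1 i) (LV_half_sym two LV aci) => diag.
  by apply: (mulIf (invr_neq0 two)); apply/eqP; rewrite mulNr -addr_eq0 diag.
have Dic : D i c = 0.
  apply: eq0_of_mul_half (nonhalf l nli nlc).
  have Dil := Dik l nli nlc; rewrite eq_sym in nli; have := derivation_sum_offdiag nli.
  rewrite sum_row Dil mul0r alc Dii mulNr => off.
  by apply/eqP; rewrite -subr_eq0 addrC off.
apply: derivation_row_eq0 => k nki.
by case: (eqVneq k c) => [->|nkc]; [exact: Dic | exact: Dik].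
Qed.

End Derivation.

Theorem mainTheorem17 (F : fieldType) (a : 'M[F]_5) :
  (2%:R : F) != 0 ->
  is_LV a ->
  lv_mul a (@e F (@Ordinal 5 1 isT)) (@e F (@Ordinal 5 3 isT))
    = 2^-1 *: (@e F (@Ordinal 5 1 isT) + @e F (@Ordinal 5 3 isT)) ->
  lv_mul a (@e F (@Ordinal 5 1 isT)) (@e F (@Ordinal 5 4 isT))
    = 2^-1 *: (@e F (@Ordinal 5 1 isT) + @e F (@Ordinal 5 4 isT)) ->
  (forall i j : 'I_5, i != j ->
     ~~ [|| [&& val i == 1%N & val j == 3%N], [&& val i == 3%N & val j == 1%N],
            [&& val i == 1%N & val j == 4%N] | [&& val i == 4%N & val j == 1%N]] ->
     lv_mul a (@e F i) (@e F j) != 2^-1 *: (@e F i + @e F j)) ->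
  forall D : 'M[F]_5, is_derivation a D -> D = 0.
Proof.
move=> two LV h13 h14 hother D HD.
have nonhalf (p q : 'I_5) : p != q ->
    ~~ [|| [&& val p == 1%N & val q == 3%N], [&& val p == 3%N & val q == 1%N],
           [&& val p == 1%N & val q == 4%N] | [&& val p == 4%N & val q == 1%N]] ->
    a p q != 2^-1.
  by move=> npq; rewrite -(lv_mul_e_half two LV npq); apply: hother.
move/eqP: h13; rewrite (lv_mul_e_half two LV) // => /eqP a13.
move/eqP: h14; rewrite (lv_mul_e_half two LV) // => /eqP a14.
have a31 := LV_half_sym two LV a13; have a41 := LV_half_sym two LV a14.
apply/row_matrixP => -[[|[|[|[|[|//]]]]] Hi]; rewrite row0 (bool_irrelevance Hi isT).
- apply: (derivation_row_isolated HD two LV) => -[[|[|[|[|[|//]]]]] Hk] nk;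
    by [case/negP: nk | exact: nonhalf].
- apply: (derivation_row_eq0 HD two LV) => -[[|[|[|[|[|//]]]]] Hk] nk.
  + by apply: (derivation_eq0_nonhalf HD two LV nk); apply: nonhalf.
  + by case/negP: nk.
  + by apply: (derivation_eq0_nonhalf HD two LV nk); apply: nonhalf.
  + by apply: (derivation_eq0_half_path HD two LV _ nk _ a14) => //; apply: nonhalf.
  + by apply: (derivation_eq0_half_path HD two LV _ nk _ a13) => //; apply: nonhalf.
- apply: (derivation_row_isolated HD two LV) => -[[|[|[|[|[|//]]]]] Hk] nk;
    by [case/negP: nk | exact: nonhalf].
- apply: (derivation_row_leaf HD two LV _ _ _ a13 a41) => // -[[|[|[|[|[|//]]]]] Hk] nki nkc;
    by [case/negP: nki | case/negP: nkc | exact: nonhalf].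
- apply: (derivation_row_leaf HD two LV _ _ _ a14 a31) => // -[[|[|[|[|[|//]]]]] Hk] nki nkc;
    by [case/negP: nki | case/negP: nkc | exact: nonhalf].
Qed.
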